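(* There is a family of classes $(K_f)_{f\in 2^\omega}$ such that for every $f\in 2^\omega$, $K_f\le_c FLO$ and $K_f\perp PF$, and for all distinct $f,g\in 2^\omega$, $K_f\perp K_g$.
   Context: Conventions: every structure is for a finite relational language with universe a subset of $\omega$; a class is a collection of structures for one language closed under isomorphism. $D(\mathcal{A})$ is the atomic diagram of $\mathcal{A}$. A computable transformation from $K$ to $K'$ is a c.e. set $\Phi$ of pairs $(\alpha,\varphi)$, $\alpha$ a finite subset of the atomic diagram of a finite structure in the language of $K$, $\varphi$ an atomic sentence or negation of one in the language of $K'$, such that for every $\mathcal{A}\in K$, $\{\varphi:(\exists\alpha\subseteq D(\mathcal{A}))(\alpha,\varphi)\in\Phi\}=D(\mathcal{B})$ for some $\mathcal{B}\in K'$. A computable embedding is a computable transformation with $\mathcal{A}\cong\mathcal{A}'\iff\Phi(\mathcal{A})\cong\Phi(\mathcal{A}')$; $K\le_c K'$ means one exists; $K\perp K'$ means $K\not\le_c K'$ and $K'\not\le_c K$. $PF$ is the class of finite prime fields (in a relational language); $FLO$ is the class of finite linear orders. *)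

From mathcomp Require Import all_boot.
Set Implicit Arguments. Unset Strict Implicit. Unset Printing Implicit Defensive.

Inductive instr := INC (r j : nat) | DEC (r j k : nat).

Definition step (M : seq instr) (c : nat * (nat -> nat)) : nat * (nat -> nat) :=
  let: (pc, R) := c in
  if pc < size M then
    match nth (INC 0 0) M pc with
    | INC r j => (j, fun x => if x == r then (R x).+1 else R x)
    | DEC r j k => if R r == 0 then (k, R)
                   else (j, fun x => if x == r then (R x).-1 else R x)
    end
  else c.

Definition halts (M : seq instr) (x : nat) : Prop :=
  exists n, size M <= (iter n (step M) (0, fun r => if r == 0 then x else 0)).1.

Definition ce_nat (P : nat -> Prop) : Prop :=
  exists M, forall x, P x <-> halts M x.

(* A language is the list of arities of its relation symbols R_0, ..., R_{k-1}. *)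
Definition lang := seq nat.

Record struc (L : lang) := MkStruc {
  univ : nat -> Prop;
  rel : nat -> seq nat -> Prop;
  univ_nonempty : exists x, univ x;
  rel_wf : forall i t, rel i t ->
    i < size L /\ size t = nth 0 L i /\ (forall x, x \in t -> univ x) }.

Definition finite_struc L (A : struc L) : Prop :=
  exists s : seq nat, forall x, univ A x <-> x \in s.

Definition iso L (A B : struc L) : Prop :=
  exists f : nat -> nat,
    (forall x, univ A x -> univ B (f x)) /\
    (forall x y, univ A x -> univ A y -> f x = f y -> x = y) /\
    (forall y, univ B y -> exists x, univ A x /\ f x = y) /\
    (forall i t, (forall x, x \in t -> univ A x) ->
       (rel A i t <-> rel B i (map f t))).

(* Atomic sentences (with constants from omega):
   (0, [:: a; b])  is  a = b ;   (i.+1, t)  is  R_i(t). *)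
Definition sentence := (nat * seq nat)%type.
Definition sentence_wf (L : lang) (s : sentence) : bool :=
  match s with
  | (0, t) => size t == 2
  | (i.+1, t) => (i < size L) && (size t == nth 0 L i)
  end.

Definition holds L (A : struc L) (s : sentence) : Prop :=
  match s with
  | (0, t) => nth 0 t 0 = nth 0 t 1
  | (i.+1, t) => rel A i t
  end.

(* Literals: (true, s) is s, (false, s) is the negation of s. *)
Definition literal := (bool * sentence)%type.

Definition diag L (A : struc L) (l : literal) : Prop :=
  sentence_wf L l.2 /\ (forall x, x \in l.2.2 -> univ A x) /\
  (holds A l.2 <-> l.1 = true).

Record cls := MkCls { clang : lang; cmem : struc clang -> Prop }.
Arguments cmem : clear implicits.

Definition iso_closed (K : cls) : Prop :=
  forall A B : struc (clang K), cmem K A -> iso A B -> cmem K B.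

Definition pairT := (seq literal * literal)%type.

Definition image L (Phi : pairT -> Prop) (A : struc L) (l : literal) : Prop :=
  exists alpha, Phi (alpha, l) /\ forall a, a \in alpha -> diag A a.

Definition comp_transf (K K' : cls) (Phi : pairT -> Prop) : Prop :=
  (exists M, forall p, Phi p <-> halts M (pickle p)) /\
  (forall p, Phi p ->
     (exists C : struc (clang K), finite_struc C /\
        forall a, a \in p.1 -> diag C a) /\
     sentence_wf (clang K') p.2.2) /\
  (forall A, cmem K A -> exists B, cmem K' B /\
     forall l, image Phi A l <-> diag B l).

Definition comp_emb (K K' : cls) (Phi : pairT -> Prop) : Prop :=
  comp_transf K K' Phi /\
  forall (A A' : struc (clang K)) (B B' : struc (clang K')),
    cmem K A -> cmem K A' ->
    (forall l, image Phi A l <-> diag B l) ->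
    (forall l, image Phi A' l <-> diag B' l) ->
    (iso A A' <-> iso B B').

Definition le_c (K K' : cls) : Prop := exists Phi, comp_emb K K' Phi.
Definition incomp (K K' : cls) : Prop := ~ le_c K K' /\ ~ le_c K' K.

Definition FLO : cls := MkCls (fun A : struc [:: 2] =>
  finite_struc A /\
  (forall x, univ A x -> ~ rel A 0 [:: x; x]) /\
  (forall x y z, rel A 0 [:: x; y] -> rel A 0 [:: y; z] -> rel A 0 [:: x; z]) /\
  (forall x y, univ A x -> univ A y -> x <> y ->
     rel A 0 [:: x; y] \/ rel A 0 [:: y; x])).

(* finite prime fields, language: graphs of + (R_0) and * (R_1), ternary;
   A is in PF iff A is isomorphic to Z/pZ for some prime p *)
Definition PF : cls := MkCls (fun A : struc [:: 3; 3] =>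
  exists p, prime p /\ exists f : nat -> nat,
    (forall x, univ A x -> f x < p) /\
    (forall x y, univ A x -> univ A y -> f x = f y -> x = y) /\
    (forall n, n < p -> exists x, univ A x /\ f x = n) /\
    (forall a b c, univ A a -> univ A b -> univ A c ->
       (rel A 0 [:: a; b; c] <-> (f a + f b) %% p = f c) /\
       (rel A 1 [:: a; b; c] <-> (f a * f b) %% p = f c))).

From mathcomp Require Import all_boot.
From Stdlib Require Import ClassicalEpsilon Classical FunctionalExtensionality.
Set Implicit Arguments. Unset Strict Implicit. Unset Printing Implicit Defensive.

(* For f : nat -> bool, K f is the class of (copies of) the orders lo n = {0 < ... < n}
   with n in a set [sizes f] containing 1 and 2.  These sets come from one stagewise
   construction, shared by all f, that meets two kinds of requirements for every
   machine e:
   - PF is not embedded: if the e-th transformation sends prime fields to orders of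
     unboundedly many sizes, one such size is kept out of every [sizes f];
   - K g is not embedded into K f (f <> g): for a prefix v of g that is not a prefix
     of f, a block of fresh sizes enters [sizes g] but not [sizes f], and the block is
     larger than the set of sizes that may lie in [sizes f] below its images.
   Then K f <=_c FLO by the identity transformation, which is c.e. because an explicit
   register machine [Mid] halts exactly on its pairs; K f does not embed into PF since
   lo 1 and lo 2 have nested diagrams while prime fields with nested diagrams are
   isomorphic. *)

Definition config := (nat * (nat -> nat))%type.

Definition reach (M : seq instr) (c c' : config) : Prop :=
  exists n, iter n (step M) c = c'.

Lemma reach_refl M c : reach M c c.
Proof. by exists 0. Qed.

Lemma reach_trans M c1 c2 c3 : reach M c1 c2 -> reach M c2 c3 -> reach M c1 c3.
Proof. by move=> [n1 <-] [n2 <-]; exists (n2 + n1); rewrite iterD. Qed.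

Lemma reach_step M c c' : reach M (step M c) c' -> reach M c c'.
Proof. by move=> [n <-]; exists n.+1; rewrite iterSr. Qed.

Definition incr (R : nat -> nat) (r : nat) : nat -> nat :=
  fun x => if x == r then (R x).+1 else R x.
Definition decr (R : nat -> nat) (r : nat) : nat -> nat :=
  fun x => if x == r then (R x).-1 else R x.

Definition instr_at (M : seq instr) (pc : nat) (i : instr) : Prop :=
  pc < size M /\ nth (INC 0 0) M pc = i.

Lemma run_inc M pc r j R c :
  instr_at M pc (INC r j) -> reach M (j, incr R r) c -> reach M (pc, R) c.
Proof. by move=> [Hpc Hi] H; apply: reach_step; rewrite /step Hpc Hi. Qed.

Lemma run_dec0 M pc r j k R c :
  instr_at M pc (DEC r j k) -> R r = 0 -> reach M (k, R) c -> reach M (pc, R) c.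
Proof. by move=> [Hpc Hi] Hr H; apply: reach_step; rewrite /step Hpc Hi Hr. Qed.

Lemma run_decS M pc r j k R c n :
  instr_at M pc (DEC r j k) -> R r = n.+1 -> reach M (j, decr R r) c ->
  reach M (pc, R) c.
Proof. by move=> [Hpc Hi] Hr H; apply: reach_step; rewrite /step Hpc Hi Hr. Qed.

Definition frame (R R' : nat -> nat) (rs : seq nat) : Prop :=
  forall x, x \notin rs -> R' x = R x.

Lemma frame_trans R1 R2 R3 rs : frame R1 R2 rs -> frame R2 R3 rs -> frame R1 R3 rs.
Proof. by move=> H12 H23 x Hx; rewrite H23 // H12. Qed.

Lemma frame_widen R R' rs rs' : {subset rs <= rs'} -> frame R R' rs -> frame R R' rs'.
Proof. by move=> Hsub H x Hx; apply: H; apply: contra Hx; apply: Hsub. Qed.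

Lemma frame_incr R r rs : r \in rs -> frame R (incr R r) rs.
Proof. by move=> Hr x Hx; rewrite /incr; case: eqP Hx => // ->; rewrite Hr. Qed.

Lemma frame_decr R r rs : r \in rs -> frame R (decr R r) rs.
Proof. by move=> Hr x Hx; rewrite /decr; case: eqP Hx => // ->; rewrite Hr. Qed.

(* The decoding block at address o, with scratch register h.  Lines o..o+2 halve s
   into h; o+3, o+4, o+7 count one halving in c and move h back to s; o+5, o+6, o+8
   empty the odd part h into q and q2, then jump to E.  It inverts the coding
   2 ^ a * (2 y + 1) of the pair (a, y) used by [CodeSeq.code] and hence by [pickle]. *)
Definition split_block M o s h c q q2 E : Prop :=
  instr_at M o (DEC s (o+1) (o+3)) /\ instr_at M (o+1) (DEC s (o+2) (o+5)) /\
  instr_at M (o+2) (INC h o) /\ instr_at M (o+3) (INC c (o+4)) /\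
  instr_at M (o+4) (DEC h (o+7) o) /\ instr_at M (o+5) (DEC h (o+6) E) /\
  instr_at M (o+6) (INC q (o+8)) /\ instr_at M (o+7) (INC s (o+4)) /\
  instr_at M (o+8) (INC q2 (o+5)).

(* Closes goals  x \notin [:: r1; ...; rk]  from disequalities in the context. *)
Ltac notin := solve [rewrite /= ?inE ?negb_or; repeat (apply/andP; split);
  by [|rewrite eq_sym]].

(* Inclusion between two explicit lists of registers. *)
Ltac sublist := let r := fresh "r" in
  move=> r; rewrite ?in_nil ?inE //; repeat case/orP; move/eqP => ->;
  by rewrite ?eqxx ?orbT.

Section SplitBlock.
Variables (M : seq instr) (o s h c q q2 E : nat).
Hypothesis Hblock : split_block M o s h c q q2 E.

Lemma split_halve : s != h ->
  forall d b R, R s = d.*2 + b -> b <= 1 ->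
  exists R', reach M (o, R) (if b == 1 then o+5 else o+3, R') /\
     R' s = 0 /\ R' h = R h + d /\ frame R R' [:: s; h].
Proof.
move: Hblock => [I0 [I1 [I2 _]]] Hsh; elim=> [|d IH] b R HR Hb.
  case: b HR Hb => [|[|//]] HR _ /=.
    exists R; split; first exact: run_dec0 I0 HR (reach_refl _ _).
    by rewrite addn0.
  exists (decr R s); split.
    apply: (run_decS I0 HR); apply: (run_dec0 I1 _ (reach_refl _ _)).
    by rewrite /decr eqxx HR.
  rewrite /decr eqxx HR eq_sym (negbTE Hsh) addn0; split => //; split => //.
  by apply: frame_decr; rewrite inE eqxx.
have HR2 : R s = (d.*2 + b).+2 by rewrite HR doubleS.
set R3 := incr (decr (decr R s) s) h.
have H3s : R3 s = d.*2 + b by rewrite /R3 /incr /decr (negbTE Hsh) !eqxx HR2.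
have [R' [Hr [Hs' [Hh' Hf]]]] := IH b R3 H3s Hb.
exists R'; split.
  apply: (run_decS I0 HR2); apply: (run_decS I1 (n := d.*2 + b)).
    by rewrite /decr eqxx HR2.
  exact: run_inc I2 Hr.
split => //; split.
  by rewrite Hh' /R3 /incr /decr eqxx eq_sym (negbTE Hsh) addSnnS addnC.
apply: frame_trans Hf; apply: frame_trans (frame_incr _ _); last by rewrite !inE eqxx orbT.
by apply: frame_trans; apply: frame_decr; rewrite inE eqxx.
Qed.

Lemma split_restore : s != h -> forall d R, R h = d ->
  exists R', reach M (o+4, R) (o, R') /\
     R' h = 0 /\ R' s = R s + d /\ frame R R' [:: s; h].
Proof.
move: Hblock => [_ [_ [_ [_ [I4 [_ [_ [I7 _]]]]]]]] Hsh; elim=> [|d IH] R HR.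
  by exists R; split; [exact: (run_dec0 I4 HR (reach_refl _ _)) | rewrite addn0].
set R2 := incr (decr R h) s.
have H2 : R2 h = d by rewrite /R2 /incr /decr eq_sym (negbTE Hsh) eqxx HR.
have [R' [Hr [Hh' [Hs' Hf]]]] := IH R2 H2.
exists R'; split; first by apply: (run_decS I4 HR); apply: (run_inc I7 Hr).
split => //; split; first by rewrite Hs' /R2 /incr /decr eqxx (negbTE Hsh) addSnnS.
apply: frame_trans Hf; apply: frame_trans (frame_incr _ _); last by rewrite inE eqxx.
by apply: frame_decr; rewrite !inE eqxx orbT.
Qed.

Lemma split_output : h != q -> h != q2 -> q != q2 -> forall d R, R h = d ->
  exists R', reach M (o+5, R) (E, R') /\
     R' h = 0 /\ R' q = R q + d /\ R' q2 = R q2 + d /\ frame R R' [:: h; q; q2].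
Proof.
move: Hblock => [_ [_ [_ [_ [_ [I5 [I6 [_ I8]]]]]]]] Hhq Hhq2 Hqq2.
elim=> [|d IH] R HR.
  by exists R; split; [exact: (run_dec0 I5 HR (reach_refl _ _)) | rewrite !addn0].
set R3 := incr (incr (decr R h) q) q2.
have H3 : R3 h = d by rewrite /R3 /incr /decr (negbTE Hhq) (negbTE Hhq2) eqxx HR.
have [R' [Hr [Hh' [Hq' [Hq2' Hf]]]]] := IH R3 H3.
exists R'; split.
  by apply: (run_decS I5 HR); apply: (run_inc I6); apply: (run_inc I8 Hr).
split => //; split.
  by rewrite Hq' /R3 /incr /decr (negbTE Hqq2) eqxx eq_sym (negbTE Hhq) addSnnS.
split.
  by rewrite Hq2' /R3 /incr /decr eqxx eq_sym (negbTE Hqq2) eq_sym (negbTE Hhq2) addSnnS.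
apply: frame_trans Hf; apply: frame_trans (frame_incr _ _); last by rewrite !inE eqxx !orbT.
apply: frame_trans (frame_incr _ _); last by rewrite !inE eqxx orbT.
by apply: frame_decr; rewrite inE eqxx.
Qed.

Lemma split_decode_odd : uniq [:: s; h; c; q; q2] ->
  forall y R, R s = y.*2.+1 -> R h = 0 ->
  exists R', reach M (o, R) (E, R') /\ R' s = 0 /\ R' h = 0 /\
     R' q = R q + y /\ R' q2 = R q2 + y /\ frame R R' [:: s; q; q2].
Proof.
rewrite /= !inE !negb_or -!andbA.
move=> /and5P[Hsh Hsc Hsq Hsq2] /and5P[Hhc Hhq Hhq2 Hcq] /and3P[Hcq2 Hqq2 _] y R HR Hh0.
have [R1 [Hr1 [H1s [H1h H1f]]]] := split_halve Hsh (d := y) (b := 1) (R := R)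
  ltac:(by rewrite HR addn1) isT.
have [R2 [Hr2 [H2h [H2q [H2q2 H2f]]]]] :=
  split_output Hhq Hhq2 Hqq2 (d := y) (R := R1) ltac:(by rewrite H1h Hh0).
exists R2; split; first exact: reach_trans Hr1 Hr2.
rewrite H2q H2q2 (H2f s) ?(H1f q) ?(H1f q2); try notin.
do 4!split => //.
move=> x Hx; case: (eqVneq x h) => [->|Hxh]; first by rewrite H2h Hh0.
move: Hx; rewrite !inE !negb_or => /and3P[Hxs Hxq Hxq2].
by rewrite H2f ?H1f //; notin.
Qed.

(* By induction on a: each even step halves s, counts one in
   c and restores s; the odd case is [split_decode_odd]. *)
Lemma split_decode : uniq [:: s; h; c; q; q2] ->
  forall a y R, R s = 2 ^ a * y.*2.+1 -> R h = 0 ->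
  exists R', reach M (o, R) (E, R') /\ R' s = 0 /\ R' h = 0 /\
     R' c = R c + a /\ R' q = R q + y /\ R' q2 = R q2 + y /\
     frame R R' [:: s; c; q; q2].
Proof.
move=> Hu; have := Hu; rewrite /= !inE !negb_or -!andbA.
move=> /and5P[Hsh Hsc Hsq Hsq2] /and5P[Hhc Hhq Hhq2 Hcq] /and3P[Hcq2 Hqq2 _].
have I3 : instr_at M (o+3) (INC c (o+4)) by case: Hblock => [_ [_ [_ []]]].
elim=> [|a IH] y R HR Hh0.
  have [R' [Hr [Hs' [Hh' [Hq' [Hq2' Hf]]]]]] :=
    split_decode_odd Hu (R := R) ltac:(by rewrite HR mul1n) Hh0.
  exists R'; do 3!split => //; split; first by rewrite Hf ?addn0 //; notin.
  by do 2!split => //; apply: frame_widen Hf; sublist.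
set m := 2 ^ a * y.*2.+1.
have [R1 [Hr1 [H1s [H1h H1f]]]] := split_halve Hsh (d := m) (b := 0) (R := R)
  ltac:(by rewrite HR expnS -mulnA mul2n addn0) isT.
set R2 := incr R1 c.
have [R3 [Hr3 [H3h [H3s H3f]]]] := split_restore Hsh (d := m) (R := R2)
  ltac:(by rewrite /R2 /incr (negbTE Hhc) H1h Hh0).
have [R4 [Hr4 [H4s [H4h [H4c [H4q [H4q2 H4f]]]]]]] :=
  IH y R3 ltac:(by rewrite H3s /R2 /incr (negbTE Hsc) H1s) H3h.
exists R4; split.
  by apply: (reach_trans Hr1); apply: (run_inc I3); apply: reach_trans Hr3 Hr4.
have R2q : R2 q = R q by rewrite /R2 /incr eq_sym (negbTE Hcq) H1f //; notin.
have R2q2 : R2 q2 = R q2 by rewrite /R2 /incr eq_sym (negbTE Hcq2) H1f //; notin.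
rewrite H4c H4q H4q2 (H3f c) ?(H3f q) ?(H3f q2) ?R2q ?R2q2; try notin.
rewrite /R2 /incr eqxx H1f; last notin.
split => //; split => //; split; first by rewrite addSnnS addnC.
split => //; split => //.
move=> x Hx; case: (eqVneq x h) => [->|Hxh]; first by rewrite H4h Hh0.
move: Hx; rewrite !inE !negb_or => /and4P[Hxs Hxc Hxq Hxq2].
by rewrite H4f ?H3f /R2 /incr ?(negbTE Hxc) ?H1f //; notin.
Qed.
End SplitBlock.

Definition eq_block M o a b N S : Prop :=
  instr_at M o (DEC a (o+1) (o+2)) /\ instr_at M (o+1) (DEC b o N) /\
  instr_at M (o+2) (DEC b N S).

Lemma eq_test M o a b N S : eq_block M o a b N S -> a != b -> forall R,
  exists R', reach M (o, R) (if R a == R b then S else N, R') /\ frame R R' [:: a; b].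
Proof.
move=> [I0 [I1 I2]] Hab R; move Ha : (R a) => n; elim: n R Ha => [|n IH] R Ha.
  case Eb : (R b) => [|m].
    exists R; split => //.
    by apply: (run_dec0 I0 Ha); apply: (run_dec0 I2 Eb (reach_refl _ _)).
  exists (decr R b); split; last by apply: frame_decr; rewrite !inE eqxx orbT.
  by apply: (run_dec0 I0 Ha); apply: (run_decS I2 Eb); apply: reach_refl.
have Fa : frame R (decr R a) [:: a; b] by apply: frame_decr; rewrite inE eqxx.
case Eb : (R b) => [|m].
  exists (decr R a); split => //.
  apply: (run_decS I0 Ha); apply: (run_dec0 I1 _ (reach_refl _ _)).
  by rewrite /decr eq_sym (negbTE Hab).
set R2 := decr (decr R a) b.
have E2b : R2 b = m by rewrite /R2 /decr eqxx eq_sym (negbTE Hab) Eb.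
have [R' [Hr Hf]] := IH R2 ltac:(by rewrite /R2 /decr (negbTE Hab) eqxx Ha).
exists R'; split.
  apply: (run_decS I0 Ha); apply: (run_decS I1 (n := m)).
    by rewrite /decr eq_sym (negbTE Hab) Eb.
  by rewrite eqSS -E2b.
apply: frame_trans Hf; apply: frame_trans Fa _.
by apply: frame_decr; rewrite !inE eqxx orbT.
Qed.

Definition zero_block M o r Z NZ : Prop :=
  instr_at M o (DEC r (o+1) Z) /\ instr_at M (o+1) (INC r NZ).

Lemma zero_test M o r Z NZ : zero_block M o r Z NZ -> forall R,
  exists R', reach M (o, R) (if R r == 0 then Z else NZ, R') /\ frame R R' [::].
Proof.
move=> [I0 I1] R; case Er : (R r) => [|n].
  by exists R; split => //; apply: (run_dec0 I0 Er (reach_refl _ _)).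
exists (incr (decr R r) r); split.
  by apply: (run_decS I0 Er); apply: (run_inc I1 (reach_refl _ _)).
by move=> x _; rewrite /incr /decr; case: eqP => [->|]; rewrite ?Er.
Qed.

Lemma pickle_cons (x : nat) (t : seq nat) : pickle (x :: t) = 2 ^ x * (pickle t).*2.+1.
Proof. by []. Qed.

Lemma pop_list M o r h c q q2 Z E R (t : seq nat) :
  zero_block M o r Z (o+2) -> split_block M (o+2) r h c q q2 E ->
  uniq [:: r; h; c; q; q2] -> R r = pickle t -> R h = 0 -> R c = 0 -> R q = 0 ->
  exists R', reach M (o, R) (if t is [::] then Z else E, R') /\
    R' c = head 0 t /\ R' q = pickle (behead t) /\ R' h = 0 /\
    frame R R' [:: r; c; q; q2].
Proof.
move=> Bz Bs Hu Hr Hh Hc Hq; have [R1 [Hr1 F1]] := zero_test Bz R.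
have F1' : frame R R1 [:: r; c; q; q2] by apply: frame_widen F1.
case: t Hr => [|x t] Hr.
  by exists R1; rewrite Hr /= in Hr1; rewrite !F1.
rewrite Hr pickle_cons muln_eq0 expn_eq0 /= in Hr1.
have [R2 [Hr2 [_ [Hh2 [Hc2 [Hq2 [_ F2]]]]]]] :=
  split_decode Bs Hu (a := x) (y := pickle t) (R := R1)
    ltac:(by rewrite F1 // Hr) ltac:(by rewrite F1).
exists R2; split; first exact: reach_trans Hr1 Hr2.
rewrite Hc2 Hq2 !F1 ?Hc ?Hq //; do 3!split => //.
by apply: frame_trans F1' (frame_widen _ F2); sublist.
Qed.

Definition init (x : nat) : config := (0, fun r => if r == 0 then x else 0).

Lemma reach_halts M x c : reach M (init x) c -> size M <= c.1 -> halts M x.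
Proof. by move=> [n <-] H; exists n. Qed.

Lemma halted_fixed M c : size M <= c.1 -> forall n, iter n (step M) c = c.
Proof. by case: c => pc R /= H; elim=> //= n ->; rewrite /step ltnNge H. Qed.

Lemma trap_no_halt M x pc R r :
  reach M (init x) (pc, R) -> instr_at M pc (INC r pc) -> ~ halts M x.
Proof.
move=> [N HN] Hi [n Hn].
have Hpc : pc < size M by case: Hi.
have Hstay : forall k R', (iter k (step M) (pc, R')).1 = pc.
  elim=> // k IH R'; rewrite iterS.
  case E: (iter k (step M) (pc, R')) => [pc' R''].
  by have := IH R'; rewrite E /= => ->; case: Hi => H1 H2; rewrite /step H1 H2.
case: (leqP n N) => Hle.
  have := halted_fixed Hn (N - n); rewrite -iterD subnK // HN => E.
  by move: Hn; rewrite -E /= leqNgt Hpc.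
by move: Hn; rewrite -(subnK (ltnW Hle)) iterD HN Hstay leqNgt Hpc.
Qed.

Definition split_code o s c q q2 E : seq instr :=
  [:: DEC s (o+1) (o+3); DEC s (o+2) (o+5); INC 9 o; INC c (o+4);
      DEC 9 (o+7) o; DEC 9 (o+6) E; INC q (o+8); INC s (o+4); INC q2 (o+5)].

(* The machine deciding the identity transformation.  On input pickle (alpha, l) it
   decodes alpha (register 1) and the code of [:: l] (registers 2, 3), checks
   alpha = [:: l], decodes l = (b, (j, t)) into b (6), j (10), the code of t (12),
   decodes t = [:: x; y] into x (13) and y (15), and finally checks that l is a literal
   of some diagram.  Address 88 = size Mid is acceptance, 87 is a rejecting trap;
   registers 17 and 19 collect discarded copies. *)
Definition Mid : seq instr :=
  split_code 0 0 1 2 3 9 ++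
  [:: DEC 1 10 11; DEC 2 9 87; DEC 2 87 12] ++
  split_code 12 3 4 17 19 21 ++
  split_code 21 4 6 7 19 30 ++
  split_code 30 7 8 17 19 39 ++
  split_code 39 8 10 11 19 48 ++
  split_code 48 11 12 17 19 57 ++
  [:: DEC 12 58 87; INC 12 59] ++
  split_code 59 12 13 14 19 68 ++
  [:: DEC 14 69 87; INC 14 70] ++
  split_code 70 14 15 16 19 79 ++
  [:: DEC 16 87 80; DEC 10 81 82; DEC 10 87 88;
      DEC 13 83 84; DEC 15 82 86; DEC 15 86 85;
      DEC 6 88 87; DEC 6 87 88; INC 18 87].

Lemma Mid_trap : instr_at Mid 87 (INC 18 87). Proof. by []. Qed.

(* Computes register contents by following [frame] facts back to known values;
   used for the routine register bookkeeping between blocks. *)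
Ltac regs := repeat match goal with
  | H : frame _ ?R' _ |- context[?R' ?x] => rewrite (H x); last by []
  | H : ?R ?x = 0 |- context[?R ?x] => rewrite H
  end; rewrite /= ?addn0 ?add0n.

Lemma init_clean x : frame (fun _ => 0) (init x).2 [:: 0].
Proof. by move=> r; rewrite inE /= => /negbTE ->. Qed.

Lemma Mid_pair (alpha : seq literal) (l : literal) :
  exists R, reach Mid (init (pickle (alpha, l))) (if alpha == [:: l] then 12 else 87, R) /\
    R 3 = pickle [:: l] /\ frame (fun _ => 0) R [:: 0; 1; 2; 3].
Proof.
have B0 : split_block Mid 0 0 9 1 2 3 9 by do !split.
have B1 : eq_block Mid 9 1 2 87 12 by do !split.
have [R1 [Hr1 [_ [_ [H1c [H1q [H1q2 H1f]]]]]]] :=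
  split_decode B0 isT (a := pickle alpha) (y := pickle [:: l])
    (R := (init (pickle (alpha, l))).2) (erefl _) (erefl _).
have [R2 [Hr2 H2f]] := eq_test B1 isT R1.
exists R2; split.
  have -> : (alpha == [:: l]) = (R1 1 == R1 2).
    by rewrite H1c H1q /= (inj_eq (pcan_inj (@pickleK _))).
  exact: reach_trans Hr1 Hr2.
split; first by regs.
apply: frame_trans (frame_widen _ (init_clean (pickle (alpha, l)))) _; first by sublist.
by apply: frame_trans H1f (frame_widen _ H2f); sublist.
Qed.

Lemma Mid_literal R (b : bool) (j : nat) (t : seq nat) :
  R 3 = pickle [:: (b, (j, t))] -> frame (fun _ => 0) R [:: 0; 1; 2; 3] ->
  exists R', reach Mid (12, R) (57, R') /\ R' 6 = b /\ R' 10 = j /\ R' 12 = pickle t /\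
    frame R R' [:: 3; 4; 6; 7; 8; 10; 11; 12; 17; 19].
Proof.
move=> H3 Hz.
have B2 : split_block Mid 12 3 9 4 17 19 21 by do !split.
have B3 : split_block Mid 21 4 9 6 7 19 30 by do !split.
have B4 : split_block Mid 30 7 9 8 17 19 39 by do !split.
have B5 : split_block Mid 39 8 9 10 11 19 48 by do !split.
have B6 : split_block Mid 48 11 9 12 17 19 57 by do !split.
have [R2 [Hr2 [_ [Z2 [H2c [_ [_ H2f]]]]]]] :=
  split_decode B2 isT (a := pickle (b, (j, t))) (y := 0) (R := R) H3 ltac:(by regs).
have [R3 [Hr3 [_ [Z3 [H3c [H3q [_ H3f]]]]]]] :=
  split_decode B3 isT (a := b) (y := pickle [:: (j, t)]) (R := R2)
    ltac:(by rewrite H2c; regs) Z2.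
have [R4 [Hr4 [_ [Z4 [H4c [_ [_ H4f]]]]]]] :=
  split_decode B4 isT (a := pickle (j, t)) (y := 0) (R := R3)
    ltac:(by rewrite H3q; regs) Z3.
have [R5 [Hr5 [_ [Z5 [H5c [H5q [_ H5f]]]]]]] :=
  split_decode B5 isT (a := j) (y := pickle [:: t]) (R := R4)
    ltac:(by rewrite H4c; regs) Z4.
have [R6 [Hr6 [_ [_ [H6c [_ [_ H6f]]]]]]] :=
  split_decode B6 isT (a := pickle t) (y := 0) (R := R5)
    ltac:(by rewrite H5q; regs) Z5.
exists R6; split.
  by apply: reach_trans Hr2 _; apply: reach_trans Hr3 _; apply: reach_trans Hr4 _;
     apply: reach_trans Hr5 Hr6.
split; first by regs; rewrite H3c; regs.
split; first by regs; rewrite H5c; regs.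
split; first by rewrite H6c; regs.
apply: frame_trans (frame_widen _ H2f) _; first by sublist.
apply: frame_trans (frame_widen _ H3f) _; first by sublist.
apply: frame_trans (frame_widen _ H4f) _; first by sublist.
by apply: frame_trans (frame_widen _ H5f) (frame_widen _ H6f); sublist.
Qed.

Lemma Mid_pair_list R (t : seq nat) :
  R 12 = pickle t -> R 9 = 0 -> R 13 = 0 -> R 14 = 0 -> R 15 = 0 -> R 16 = 0 ->
  exists R', reach Mid (57, R) (if size t == 2 then 80 else 87, R') /\
    R' 13 = nth 0 t 0 /\ R' 15 = nth 0 t 1 /\ frame R R' [:: 12; 13; 14; 15; 16; 19].
Proof.
move=> H12 Z9 Z13 Z14 Z15 Z16.
have B7 : zero_block Mid 57 12 87 59 by do !split.
have B8 : split_block Mid 59 12 9 13 14 19 68 by do !split.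
have B9 : zero_block Mid 68 14 87 70 by do !split.
have B10 : split_block Mid 70 14 9 15 16 19 79 by do !split.
have [R1 [Hr1 [H1c [H1q [Z1 F1]]]]] := pop_list B7 B8 isT H12 Z9 Z13 Z14.
have [R2 [Hr2 [H2c [H2q [_ F2]]]]] :=
  pop_list (R := R1) B9 B10 isT H1q Z1 ltac:(by regs) ltac:(by regs).
have F12 : frame R R2 [:: 12; 13; 14; 15; 16; 19].
  by apply: frame_trans (frame_widen _ F1) (frame_widen _ F2); sublist.
case: t {H12} Hr1 H1c H1q Hr2 H2c H2q => [|x [|y t]] /= Hr1 H1c H1q Hr2 H2c H2q.
- by exists R1; split => //; regs; do 2!split => //; apply: frame_widen F1; sublist.
- by exists R2; split; [exact: reach_trans Hr1 Hr2 | regs].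
have Hr := reach_trans Hr1 Hr2.
case: t H1q H2q => [|z t] H1q H2q.
  exists R2; split; last by regs.
  by apply: reach_trans Hr (run_dec0 (j := 87) _ H2q (reach_refl _ _)).
exists (decr R2 16); split.
  apply: reach_trans Hr
    (run_decS (k := 80) _ (n := (pickle (z :: t)).-1) _ (reach_refl _ _)).
    by [].
  by rewrite H2q prednK // pickle_cons muln_gt0 expn_gt0.
split; first by rewrite /decr /= F2.
split; first by rewrite /decr /=.
exact: frame_trans F12 (frame_decr _ _).
Qed.

(* The literals that occur in atomic diagrams of structures in the language [:: 2]:
   any binary relation literal, and the true (in)equalities. *)
Definition diag_literal (l : literal) : bool :=
  let: (b, (j, t)) := l in
  ((j == 1) && (size t == 2)) ||
  ((j == 0) && (if t is [:: x; y] then b == (x == y) else false)).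

Lemma Mid_check (R : nat -> nat) (b : bool) (j x y : nat) :
  R 6 = b -> R 10 = j -> R 13 = x -> R 15 = y ->
  exists R', reach Mid (80, R) (if diag_literal (b, (j, [:: x; y])) then 88 else 87, R').
Proof.
move=> H6 H10 H13 H15.
case: j H10 => [|[|j]] H10.
- have B11 : eq_block Mid 82 13 15 86 85 by do !split.
  have [R1 [Hr1 H1f]] := eq_test B11 isT R.
  have H16 : R1 6 = b by regs.
  have Hr : reach Mid (80, R) (82, R) by apply: (run_dec0 (j := 81) _ H10 (reach_refl _ _)).
  have {Hr Hr1} := reach_trans Hr Hr1; rewrite H13 H15 => Hr.
  exists (if b then decr R1 6 else R1); apply: reach_trans Hr _ => /=.
  case: (x == y); case: b H6 H16 => H6 H16 /=.
  + by apply: (run_decS (k := 87) _ H16 (reach_refl _ _)).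
  + by apply: (run_dec0 (j := 88) _ H16 (reach_refl _ _)).
  + by apply: (run_decS (k := 88) _ H16 (reach_refl _ _)).
  + by apply: (run_dec0 (j := 87) _ H16 (reach_refl _ _)).
- exists (decr R 10).
  apply: (run_decS (j := 81) _ H10); first by [].
  apply: (run_dec0 (r := 10) (j := 87) _ _ (reach_refl _ _)); first by [].
  by rewrite /decr eqxx H10.
- exists (decr (decr R 10) 10).
  apply: (run_decS (j := 81) _ H10); first by [].
  apply: (run_decS (r := 10) (j := 87) (n := j) _ _ (reach_refl _ _)); first by [].
  by rewrite /decr eqxx H10.
Qed.

Definition id_pair (p : pairT) : bool := (p.1 == [:: p.2]) && diag_literal p.2.

Lemma Mid_run p : exists R, reach Mid (init (pickle p)) (if id_pair p then 88 else 87, R).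
Proof.
case: p => alpha [b [j t]]; rewrite /id_pair /=.
have [R1 [Hr1 [H13 Hz1]]] := Mid_pair alpha (b, (j, t)).
case: (alpha == _) Hr1 => Hr1 /=; last by exists R1.
have [R2 [Hr2 [H26 [H210 [H212 F2]]]]] := Mid_literal H13 Hz1.
have [R3 [Hr3 [H313 [H315 F3]]]] :=
  Mid_pair_list (R := R2) H212 ltac:(by regs) ltac:(by regs) ltac:(by regs)
    ltac:(by regs) ltac:(by regs).
have Hr13 := reach_trans Hr1 (reach_trans Hr2 Hr3).
case: t {H13 Hr1 H212 Hr2 Hr3} H313 H315 Hr13 => [|x [|y [|z t]]] H313 H315 Hr13;
  try by exists R3; move: Hr13; rewrite /= !andbF.
have [R4 Hr4] :=
  Mid_check (b := b) (j := j) (R := R3) ltac:(by regs) ltac:(by regs) H313 H315.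
by exists R4; apply: reach_trans Hr13 Hr4.
Qed.

Lemma Mid_spec p : id_pair p <-> halts Mid (pickle p).
Proof.
have [R HR] := Mid_run p; case: (id_pair p) HR => HR.
  by split => // _; exact: reach_halts HR _.
by split => // /(trap_no_halt HR Mid_trap).
Qed.

Lemma iso_refl L (A : struc L) : iso A A.
Proof.
exists id; split => //; split => //; split; first by move=> y Hy; exists y.
by move=> i t _; rewrite map_id.
Qed.

Lemma iso_trans L (A B C : struc L) : iso A B -> iso B C -> iso A C.
Proof.
move=> [f [f1 [f2 [f3 f4]]]] [g [g1 [g2 [g3 g4]]]].
exists (g \o f); split; first by move=> x Hx; apply: g1; apply: f1.
split; first by move=> x y Hx Hy /= E; apply: f2 => //; apply: g2 => //; apply: f1.
split.
  move=> z Hz; have [y [Hy <-]] := g3 z Hz; have [x [Hx <-]] := f3 y Hy.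
  by exists x.
move=> i t Ht; rewrite (f4 i t Ht) map_comp g4 //.
by move=> y /mapP [x Hx ->]; apply: f1; apply: Ht.
Qed.

Lemma iso_sym L (A B : struc L) : iso A B -> iso B A.
Proof.
move=> [f [f1 [f2 [f3 f4]]]].
pose g y := epsilon (inhabits 0) (fun x => univ A x /\ f x = y).
have gP : forall y, univ B y -> univ A (g y) /\ f (g y) = y.
  move=> y Hy; apply: (epsilon_spec (inhabits 0) (fun x => univ A x /\ f x = y)).
  exact: f3.
exists g; split; first by move=> y /gP [].
split.
  move=> y y' Hy Hy' E; have [_ <-] := gP y Hy; have [_ <-] := gP y' Hy'.
  by rewrite E.
split.
  move=> x Hx; exists (f x); split; first exact: f1.
  by have [H1 H2] := gP (f x) (f1 x Hx); apply: f2.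
move=> i t Ht.
have Ht' : forall x, x \in map g t -> univ A x.
  by move=> x /mapP [y Hy ->]; have [] := gP y (Ht y Hy).
rewrite (f4 i _ Ht') -map_comp.
suff -> : map (f \o g) t = t by [].
rewrite -[RHS]map_id; apply/eq_in_map => y Hy /=.
by have [] := gP y (Ht y Hy).
Qed.

Lemma univ_diag L (A : struc L) x : univ A x <-> diag A (true, (0, [:: x; x])).
Proof.
split; last by move=> [_ [H _]]; apply: H; rewrite inE eqxx.
by move=> Hx; split => //; split => // y; rewrite !inE => /orP [] /eqP ->.
Qed.

Lemma rel_diag L (A : struc L) i t : rel A i t <-> diag A (true, (i.+1, t)).
Proof.
split; last by move=> [_ [_ H]]; apply/H.
move=> H; have [Hi [Hs Hu]] := rel_wf H.
by split; first by rewrite /= Hi Hs eqxx.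
Qed.

Lemma diag_iso L (A B : struc L) : (forall l, diag A l <-> diag B l) -> iso A B.
Proof.
move=> H; exists id; split; first by move=> x /univ_diag /H /univ_diag.
split => //; split; first by move=> y /univ_diag /H /univ_diag Hy; exists y.
by move=> i t _; rewrite map_id !rel_diag H.
Qed.

Lemma diag_sub_complete L (A B : struc L) :
  (forall l, diag A l -> diag B l) -> (forall x, univ B x -> univ A x) ->
  forall l, diag B l -> diag A l.
Proof.
move=> Hsub Hu [bb s] [/= Hw [/= Hc /= Hh]].
have HcA : forall x, x \in s.2 -> univ A x by move=> x /Hc /Hu.
case: (classic (holds A s)) => Hs.
  have /Hsub [_ [_ HB]] : diag A (true, s) by [].
  have -> : bb = true by apply/Hh/HB.
  by [].
have /Hsub [_ [_ HB]] : diag A (false, s) by split => //; split => //; split => // /Hs.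
have -> : bb = false by case: bb Hh => // /iffRL /(_ erefl) /HB.
by split => //; split => //; split => // /Hs.
Qed.

Lemma inj_card (f : nat -> nat) a b : (forall x, x < a -> f x < b) ->
  (forall x y, x < a -> y < a -> f x = f y -> x = y) -> a <= b.
Proof.
move=> H1 H2.
have U : uniq (map f (iota 0 a)).
  rewrite map_inj_in_uniq ?iota_uniq // => x y; rewrite !mem_iota !add0n.
  by move=> /andP[_ Hx] /andP[_ Hy]; apply: H2.
have := uniq_leq_size (s2 := iota 0 b) U; rewrite size_map !size_iota; apply.
move=> y /mapP [x]; rewrite !mem_iota !add0n => /andP[_ Hx] ->.
by rewrite leq0n /= H1.
Qed.

Lemma iso_card L (A B : struc L) a b : (forall x, univ A x <-> x < a) ->
  (forall x, univ B x <-> x < b) -> iso A B -> a = b.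
Proof.
have le : forall (A B : struc L) a b, (forall x, univ A x <-> x < a) ->
    (forall x, univ B x <-> x < b) -> iso A B -> a <= b.
  move=> A' B' a' b' HA HB [f [f1 [f2 _]]]; apply: (inj_card (f := f)).
    by move=> x /HA Hx; apply/HB; apply: f1.
  by move=> x y /HA Hx /HA Hy; apply: f2.
move=> HA HB H; apply/eqP; rewrite eqn_leq.
by rewrite (le _ _ _ _ HA HB H) (le _ _ _ _ HB HA (iso_sym H)).
Qed.

Definition lo_rel (n : nat) (i : nat) (t : seq nat) : Prop :=
  i = 0 /\ exists x y, t = [:: x; y] /\ x < y /\ y <= n.

Lemma lo_nonempty n : exists x, x <= n. Proof. by exists 0. Qed.

Lemma lo_wf n : forall i t, lo_rel n i t ->
  i < size [:: 2] /\ size t = nth 0 [:: 2] i /\ (forall x, x \in t -> x <= n).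
Proof.
move=> i t [-> [x [y [-> [Hxy Hy]]]]]; split => //; split => // z.
by rewrite !inE => /orP [] /eqP -> //; apply: leq_trans Hy; apply: ltnW.
Qed.

Definition lo (n : nat) : struc [:: 2] :=
  @MkStruc [:: 2] (fun x => x <= n) (lo_rel n) (lo_nonempty n) (@lo_wf n).

Lemma lo_iso n m : iso (lo n) (lo m) -> n = m.
Proof.
move=> H; have [] := iso_card (A := lo n) (B := lo m) (a := n.+1) (b := m.+1)
  (fun x => iff_refl _) (fun x => iff_refl _) H.
by [].
Qed.

Lemma lo_FLO n B : iso (lo n) B -> cmem FLO B.
Proof.
move=> [f [f1 [f2 [f3 f4]]]].
have pre : forall y, univ B y -> exists x, x <= n /\ f x = y.
  by move=> y /f3 [x [Hx <-]]; exists x.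
have R2 : forall x y, x <= n -> y <= n -> (rel B 0 [:: f x; f y] <-> x < y).
  move=> x y Hx Hy.
  have Hu : forall z, z \in [:: x; y] -> univ (lo n) z.
    by move=> z; rewrite !inE => /orP [] /eqP ->.
  rewrite -[[:: f x; f y]]/(map f [:: x; y]) -f4 //=.
  split; first by move=> [_ [x' [y' [[-> ->] [H _]]]]].
  by move=> H; split => //; exists x, y.
have wf2 : forall y z, rel B 0 [:: y; z] -> univ B y /\ univ B z.
  move=> y z /rel_wf [_ [_ Hu]]; split; apply: Hu; by rewrite !inE eqxx ?orbT.
split.
  exists (map f (iota 0 n.+1)) => y; split.
    by move=> /pre [x [Hx <-]]; apply: map_f; rewrite mem_iota add0n ltnS Hx.
  by move=> /mapP [x]; rewrite mem_iota add0n ltnS => /andP[_ Hx] ->; apply: f1.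
split; first by move=> y /pre [x [Hx <-]] /(R2 x x Hx Hx); rewrite ltnn.
split.
  move=> y z w H1 H2.
  have [/pre [x [Hx Ex]] /pre [x' [Hx' Ex']]] := wf2 _ _ H1.
  have [_ /pre [x'' [Hx'' Ex'']]] := wf2 _ _ H2.
  move: H1 H2; rewrite -Ex -Ex' -Ex'' !R2 //; exact: ltn_trans.
move=> y z /pre [x [Hx <-]] /pre [x' [Hx' <-]] Hne.
by rewrite !R2 //; case: (ltngtP x x') => E; [left | right | rewrite E in Hne].
Qed.

Lemma diag_lo_mono a b l : a <= b -> diag (lo a) l -> diag (lo b) l.
Proof.
move=> Hab [Hw [Hu Hh]]; split => //; split.
  by move=> x /Hu /= Hx; apply: leq_trans Hx Hab.
case: l Hw Hu Hh => bb [[|i] t] Hw Hu Hh //=.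
rewrite -Hh /= /lo_rel.
split; move=> [Hi [x [y [Et [Hxy Hy]]]]]; split => //; exists x, y; do 2!split => //.
  by apply: Hu; rewrite Et !inE eqxx orbT.
exact: leq_trans Hy Hab.
Qed.

Definition fld_rel (p : nat) (i : nat) (t : seq nat) : Prop :=
  exists a b c, t = [:: a; b; c] /\ a <= p.-1 /\ b <= p.-1 /\ c <= p.-1 /\
   ((i = 0 /\ (a + b) %% p = c) \/ (i = 1 /\ (a * b) %% p = c)).

Lemma fld_nonempty p : exists x, x <= p.-1. Proof. by exists 0. Qed.

Lemma fld_wf p : forall i t, fld_rel p i t ->
  i < size [:: 3; 3] /\ size t = nth 0 [:: 3; 3] i /\ (forall x, x \in t -> x <= p.-1).
Proof.
move=> i t [a [b [c [-> [Ha [Hb [Hc H]]]]]]].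
split; first by case: H => [[-> _]|[-> _]].
split; first by case: H => [[-> _]|[-> _]].
by move=> z; rewrite !inE => /or3P [] /eqP ->.
Qed.

Definition fld (p : nat) : struc [:: 3; 3] :=
  @MkStruc [:: 3; 3] (fun x => x <= p.-1) (fld_rel p) (fld_nonempty p) (@fld_wf p).

Lemma fld_univ p x : prime p -> (univ (fld p) x <-> x < p).
Proof. by move=> Hp /=; rewrite -ltnS prednK // prime_gt0. Qed.

Lemma fld_PF p : prime p -> cmem PF (fld p).
Proof.
move=> Hp; exists p; split => //; exists id.
split; first by move=> x /(fld_univ x Hp).
split => //; split; first by move=> n Hn; exists n; split => //; apply/(fld_univ n Hp).
move=> a b c Ha Hb Hc; split; split.
- by move=> [a' [b' [c' [[-> -> ->] [_ [_ [_ [[_ H]|[H _]]]]]]]]].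
- by move=> H; exists a, b, c; do 4!split => //; left.
- by move=> [a' [b' [c' [[-> -> ->] [_ [_ [_ [[H _]|[_ H]]]]]]]]].
- by move=> H; exists a, b, c; do 4!split => //; right.
Qed.

Lemma fld_iso p q : prime p -> prime q -> iso (fld p) (fld q) -> p = q.
Proof. by move=> Hp Hq; apply: iso_card => x; apply: fld_univ. Qed.

Lemma double_mod0 x q : x < q -> (x + x) %% q = x -> x = 0.
Proof.
move=> Hx H; have : x + x == x + 0 %[mod q] by rewrite H addn0 modn_small.
by rewrite eqn_modDl mod0n modn_small // => /eqP.
Qed.

Lemma mod_multiples_cover q c y : prime q -> 0 < c < q -> y < q ->
  exists k, (k * c) %% q = y.
Proof.
move=> Hq /andP[Hc0 Hcq] Hy.
have Hcop : coprime c q.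
  rewrite coprime_sym prime_coprime //; apply/negP => /(dvdn_leq Hc0).
  by rewrite leqNgt Hcq.
have [[u v] /= Huv] := coprimeP _ Hc0 Hcop.
have Hle : v * q <= u * c by apply: ltnW; rewrite -subn_gt0 Huv.
have Hinv : c * u = v * q + 1 by rewrite mulnC -(subnK Hle) Huv addnC.
exists (y * u); rewrite -mulnA [u * c]mulnC Hinv mulnDr mulnA modnMDl muln1.
exact: modn_small.
Qed.

(* If D(B) is included in D(B') for prime fields B, B', then B' has no new elements:
   the elements of B realize 0 and all multiples of the (nonzero) image of 1. *)
Lemma PF_univ_sub (B B' : struc [:: 3; 3]) : cmem PF B -> cmem PF B' ->
  (forall l, diag B l -> diag B' l) -> forall y, univ B' y -> univ B y.
Proof.
move=> [p [Hp [f [f1 [f2 [f3 f4]]]]]] [q [Hq [g [g1 [g2 [g3 g4]]]]]] Hsub.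
have U : forall x, univ B x -> univ B' x by move=> x /univ_diag /Hsub /univ_diag.
have Rl : forall i t, rel B i t -> rel B' i t by move=> i t /rel_diag /Hsub /rel_diag.
have [z [Hz Ez]] := f3 0 (prime_gt0 Hp).
have [a [Ha Ea]] := f3 1 (prime_gt1 Hp).
have gz : g z = 0.
  have Hzzz : rel B 0 [:: z; z; z] by apply/(f4 z z z Hz Hz Hz).1; rewrite Ez add0n mod0n.
  apply: double_mod0 (g1 z (U z Hz)) _.
  exact: (g4 z z z (U z Hz) (U z Hz) (U z Hz)).1.1 (Rl _ _ Hzzz).
have ga : 0 < g a < q.
  rewrite (g1 a (U a Ha)) andbT lt0n; apply/eqP => E.
  have Eaz : a = z by apply: g2; rewrite ?E ?gz //; exact: U.
  by move: Ea; rewrite Eaz Ez.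
have mult : forall k, exists x, univ B x /\ g x = (k * g a) %% q.
  elim=> [|k [x [Hx Ex]]]; first by exists z; rewrite gz mul0n mod0n.
  have [w [Hw Ew]] := f3 ((f x + 1) %% p) (ltn_pmod _ (prime_gt0 Hp)).
  have Hr : rel B 0 [:: x; a; w] by apply/(f4 x a w Hx Ha Hw).1; rewrite Ew Ea.
  exists w; split => //.
  rewrite -((g4 x a w (U x Hx) (U a Ha) (U w Hw)).1.1 (Rl _ _ Hr)) Ex modnDml.
  by rewrite mulSn addnC.
move=> y Hy; have [k Hk] := mod_multiples_cover Hq ga (g1 y Hy).
have [x [Hx Ex]] := mult k.
by have <- : x = y by apply: g2 => //; [exact: U | rewrite Ex].
Qed.

Lemma PF_rigid (B B' : struc [:: 3; 3]) : cmem PF B -> cmem PF B' ->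
  (forall l, diag B l -> diag B' l) -> iso B B'.
Proof.
move=> HB HB' Hsub; apply: diag_iso => l; split; first exact: Hsub.
exact: diag_sub_complete Hsub (PF_univ_sub HB HB' Hsub) l.
Qed.

(* Candidate blocks are intervals [iota]; keep them folded under simplification. *)
Local Arguments iota : simpl never.

(* The requirements of the construction: [inl e] keeps a size of a prime-field image
   under machine e out of S, [inr (e, v)] defeats machine e as an embedding of the
   classes for the f extending v into the classes for the other f. *)
Definition task := (nat + (nat * seq bool))%type.

Definition prefix_of (f : nat -> bool) (v : seq bool) : bool :=
  v == [seq f i | i <- iota 0 (size v)].

Lemma separating_prefix (f g : nat -> bool) : f <> g ->
  exists v, prefix_of g v && ~~ prefix_of f v.
Proof.
move=> Hfg; have [k Hk] : exists k, f k <> g k.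
  apply: NNPP => H; apply: Hfg; apply: functional_extensionality => x.
  by apply: NNPP => Hx; apply: H; exists x.
exists (map g (iota 0 k.+1)); rewrite /prefix_of size_map size_iota eqxx andTb.
apply/eqP => /(congr1 (nth false ^~ k)).
by rewrite !(nth_map 0) ?size_iota // nth_iota // add0n => /esym.
Qed.

(* The construction is parametrized by the partial map [img e n] (size of the image
   of lo n under machine e) and by [pf_img e m] (m is the size of the image of some
   prime field under machine e).  A stage state (b, P) consists of a bound b and the
   list P of all numbers <= b that may belong to some [sizes f]. *)
Section Construction.
Variable img : nat -> nat -> option nat.
Variable pf_img : nat -> nat -> Prop.

Definition pick_above (e b : nat) : nat :=
  epsilon (inhabits 0) (fun m => pf_img e m /\ b < m).

(* Stage s handles task s: for [inl e] the bound jumps over a prime-field image; for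
   [inr (e, v)] a block of (size P).+1 fresh candidates is reserved, and the bound
   jumps over their images under machine e. *)
Definition stage_step (s : nat) (st : nat * seq nat) : nat * seq nat :=
  let: (b, P) := st in
  match @unpickle task s with
  | Some (inl e) => (maxn b (pick_above e b), P)
  | Some (inr (e, _)) =>
      let C := iota b.+1 (size P).+1 in
      (maxn (b + (size P).+1) (\max_(n <- C) odflt 0 (img e n)), P ++ C)
  | None => (b, P)
  end.

Fixpoint stage (s : nat) : nat * seq nat :=
  if s is s'.+1 then stage_step s' (stage s') else (2, [:: 1; 2]).

Definition cand (s : nat) : seq nat :=
  if @unpickle task s is Some (inr _) then iota (stage s).1.+1 (size (stage s).2).+1
  else [::].

Definition chosen (f : nat -> bool) (s : nat) : bool :=
  if @unpickle task s is Some (inr (_, v)) then prefix_of f v else false.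

Definition sizes (f : nat -> bool) (n : nat) : Prop :=
  n = 1 \/ n = 2 \/ exists s, chosen f s /\ n \in cand s.

Lemma stage_succ s :
  (stage s).1 <= (stage s.+1).1 /\
  (forall n, n \in cand s -> (stage s).1 < n <= (stage s.+1).1) /\
  (stage s.+1).2 = (stage s).2 ++ cand s.
Proof.
rewrite /cand /=; case: (stage s) => b P /=.
case: (@unpickle task s) => [[e|[e v]]|] /=.
- by split; [apply: leq_maxl | split => //; rewrite cats0].
- split; first by apply: leq_trans (leq_maxl _ _); apply: leq_addr.
  split => // n; rewrite mem_iota => /andP [-> H2] /=.
  by apply: leq_trans (leq_maxl _ _); rewrite -ltnS -addSn.
- by split => //; split => //; rewrite cats0.
Qed.

Lemma bound_mono s s' : s <= s' -> (stage s).1 <= (stage s').1.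
Proof.
move=> /subnK <-; elim: (s' - s) => // k IH.
by rewrite addSn; apply: leq_trans IH (proj1 (stage_succ _)).
Qed.

Lemma reserved_mono s s' : s <= s' -> {subset (stage s).2 <= (stage s').2}.
Proof.
move=> /subnK <-; elim: (s' - s) => // k IH n Hn.
by rewrite addSn (proj2 (proj2 (stage_succ _))) mem_cat IH.
Qed.

Lemma sizes_below_bound f s n : sizes f n -> n <= (stage s).1 -> n \in (stage s).2.
Proof.
move=> [->|[->|[s' [_ Hn]]]] Hle.
- by apply: (reserved_mono (leq0n s)); rewrite inE.
- by apply: (reserved_mono (leq0n s)); rewrite !inE.
case: (ltnP s' s) => Hs.
  apply: (reserved_mono Hs).
  by rewrite (proj2 (proj2 (stage_succ _))) mem_cat Hn orbT.
have /andP [H _] := (proj1 (proj2 (stage_succ s'))) n Hn.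
by move: Hle; rewrite leqNgt (leq_ltn_trans (bound_mono Hs) H).
Qed.

Lemma sizes_at_stage f s n : sizes f n -> (stage s).1 < n -> n <= (stage s.+1).1 ->
  chosen f s /\ n \in cand s.
Proof.
have b2 : forall s0, 2 <= (stage s0).1 by move=> s0; apply: (bound_mono (leq0n s0)).
move=> [->|[->|[s' [Ht Hn]]]] H1 H2.
- by move: (leq_ltn_trans (leq_trans (isT : 1 <= 2) (b2 s)) H1); rewrite ltnn.
- by move: (leq_ltn_trans (b2 s) H1); rewrite ltnn.
have /andP [H3 H4] := (proj1 (proj2 (stage_succ s'))) n Hn.
case: (ltngtP s' s) => Hs; last by subst s'.
  by rewrite ltnNge (leq_trans H4 (bound_mono Hs)) in H1.
by rewrite ltnNge (leq_trans H2 (bound_mono Hs)) in H3.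
Qed.

Lemma sizes_avoid_pf_img f e : (forall N, exists m, pf_img e m /\ N < m) ->
  exists m, pf_img e m /\ ~ sizes f m.
Proof.
move=> Hunb; set s := pickle (inl e : task).
have Hs : @unpickle task s = Some (inl e) by rewrite pickleK.
set b := (stage s).1.
have [Hm1 Hm2] : pf_img e (pick_above e b) /\ b < pick_above e b.
  by apply: (epsilon_spec (inhabits 0) (fun m => pf_img e m /\ b < m)); apply: Hunb.
exists (pick_above e b); split => // HS.
have Hb : (stage s.+1).1 = maxn b (pick_above e b).
  by rewrite /= /b; case: (stage s) => b' P; rewrite /stage_step Hs.
have [_] := sizes_at_stage HS Hm2 (ltac:(by rewrite Hb leq_maxr)).
by rewrite /cand Hs.
Qed.

(* Counting at stage [inr (e, v)] with v not a prefix of f: the candidates cannot be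
   sent injectively into [sizes f], as their images would all be reserved numbers. *)
Lemma stage_defeats f s e v : @unpickle task s = Some (inr (e, v)) -> ~~ prefix_of f v ->
  (forall n, n \in cand s -> exists2 m, img e n = Some m & sizes f m) ->
  ~ {in cand s &, injective (fun n => odflt 0 (img e n))}.
Proof.
move=> Hs Hfv Himg Hinj.
set F := fun n => odflt 0 (img e n) in Hinj.
have Hc : cand s = iota (stage s).1.+1 (size (stage s).2).+1 by rewrite /cand Hs.
have Hb : (stage s.+1).1 =
    maxn ((stage s).1 + (size (stage s).2).+1) (\max_(n <- cand s) F n).
  by rewrite Hc /=; case: (stage s) => b P; rewrite /stage_step Hs.
have Hsub : {subset map F (cand s) <= (stage s).2}.
  move=> m /mapP [n Hn ->]; have [m' Em' HS] := Himg n Hn.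
  have EF : F n = m' by rewrite /F Em'.
  rewrite EF in HS *; case: (leqP m' (stage s).1) => Hle.
    exact: sizes_below_bound HS Hle.
  have Hle2 : m' <= (stage s.+1).1.
    by rewrite Hb -EF; apply: leq_trans (leq_maxr _ _); apply: leq_bigmax_seq.
  have [Hch _] := sizes_at_stage HS Hle Hle2.
  by move: Hch Hfv; rewrite /chosen Hs => ->.
have Huniq : uniq (map F (cand s)) by rewrite (map_inj_in_uniq Hinj) Hc iota_uniq.
by have := uniq_leq_size Huniq Hsub; rewrite size_map Hc size_iota ltnn.
Qed.

Lemma sizes_diagonal f g e : f <> g ->
  exists n, sizes g n /\ (img e n = None \/ (exists2 m, img e n = Some m & ~ sizes f m) \/
    exists n', [/\ sizes g n', n' <> n & img e n' = img e n]).
Proof.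
move=> /separating_prefix [v /andP [Hgv Hfv]].
set s := pickle (inr (e, v) : task).
have Hs : @unpickle task s = Some (inr (e, v)) by rewrite pickleK.
have Hg : forall n, n \in cand s -> sizes g n.
  by move=> n Hn; right; right; exists s; rewrite /chosen Hs.
apply: NNPP => Hno.
have Himg : forall n, n \in cand s -> exists2 m, img e n = Some m & sizes f m.
  move=> n Hn; case E: (img e n) => [m|].
    exists m => //; apply: NNPP => Hm; apply: Hno; exists n; split; first exact: Hg.
    by right; left; exists m.
  by case: Hno; exists n; split; [exact: Hg | left].
apply: (stage_defeats Hs Hfv Himg) => n n' Hn Hn' /= EF; apply: NNPP => Hne; apply: Hno.
exists n; split; first exact: Hg.
right; right; exists n'; split; [exact: Hg | by move=> E; apply: Hne | ].
have [m Em _] := Himg n Hn; have [m' Em' _] := Himg n' Hn'.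
by move: EF; rewrite Em Em' /= => ->.
Qed.
End Construction.

Definition pair_rel (x y : nat) (r : bool) (i : nat) (t : seq nat) : Prop :=
  r = true /\ i = 0 /\ t = [:: x; y].

Lemma pair_nonempty (x y : nat) : exists z : nat, z = x \/ z = y.
Proof. by exists x; left. Qed.

Lemma pair_wf x y r : forall i t, pair_rel x y r i t ->
  i < size [:: 2] /\ size t = nth 0 [:: 2] i /\ (forall z, z \in t -> z = x \/ z = y).
Proof.
move=> i t [_ [-> ->]]; split => //; split => // z.
by rewrite !inE => /orP [] /eqP ->; [left | right].
Qed.

Definition pair_struc x y r : struc [:: 2] :=
  @MkStruc [:: 2] (fun z => z = x \/ z = y) (pair_rel x y r) (pair_nonempty x y)
    (@pair_wf x y r).

Lemma pair_struc_finite x y r : finite_struc (pair_struc x y r).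
Proof.
exists [:: x; y] => z /=; rewrite !inE; split; first by move=> [->|->]; rewrite eqxx ?orbT.
by move=> /orP [] /eqP ->; [left | right].
Qed.

Lemma diag_literal_sound (A : struc [:: 2]) l : diag A l -> diag_literal l.
Proof.
case: l => b [[|[|i]] t] [Hw [Hu Hh]] //=; last by move: Hw => /= ->.
move: Hw => /= /eqP; case: t Hu Hh => [|x [|y [|z t]]] // _ /= Hh _.
case: (eqVneq x y) => Exy; first by rewrite (proj1 Hh Exy).
by case: b Hh => Hh //; move: Exy; rewrite (proj2 Hh erefl) eqxx.
Qed.

Lemma diag_literal_realized l : diag_literal l ->
  exists C : struc [:: 2], finite_struc C /\ diag C l.
Proof.
have Hu : forall x y r z, z \in [:: x; y] -> univ (pair_struc x y r) z.
  by move=> x y r z; rewrite !inE => /orP [] /eqP ->; [left | right].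
case: l => b [j t] /= /orP [/andP [/eqP -> Ht]|/andP [/eqP -> Ht]].
  case: t Ht => [|x [|y [|z t]]] // _.
  exists (pair_struc x y b); split; first exact: pair_struc_finite.
  split => //; split; first exact: Hu.
  by rewrite /= /pair_rel; split; [move=> [] | move=> H; split].
case: t Ht => [|x [|y [|z t]]] // /eqP ->.
exists (pair_struc x y false); split; first exact: pair_struc_finite.
split => //; split; first exact: Hu.
by split => /=; [move=> ->; rewrite eqxx | move=> /eqP].
Qed.

Lemma image_id (A : struc [:: 2]) l : image id_pair A l <-> diag A l.
Proof.
split; first by move=> [alpha [/andP [/eqP /= -> _] H]]; apply: H; rewrite inE.
move=> H; exists [:: l]; split; first by rewrite /id_pair /= eqxx (diag_literal_sound H).
by move=> a; rewrite inE => /eqP ->.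
Qed.

Lemma le_c_FLO (P : struc [:: 2] -> Prop) :
  (forall A, P A -> cmem FLO A) -> le_c (MkCls P) FLO.
Proof.
move=> HP; exists id_pair; split.
  split; first by exists Mid; exact: Mid_spec.
  split.
    move=> [alpha l] /andP [/eqP /= -> Hl].
    have [C [HC HCl]] := diag_literal_realized Hl.
    split; last exact: (proj1 HCl).
    by exists C; split => // a; rewrite inE => /eqP ->.
  by move=> A HA; exists A; split; [exact: HP | exact: image_id].
move=> A A' B B' _ _ HB HB'.
have iAB : iso A B by apply: diag_iso => l; rewrite -image_id; apply: HB.
have iAB' : iso A' B' by apply: diag_iso => l; rewrite -image_id; apply: HB'.
split => H; first exact: iso_trans (iso_sym iAB) (iso_trans H iAB').
exact: iso_trans iAB (iso_trans H (iso_sym iAB')).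
Qed.

Definition instr_code (i : instr) : bool * (nat * (nat * nat)) :=
  match i with INC r j => (false, (r, (j, 0))) | DEC r j k => (true, (r, (j, k))) end.
Definition instr_decode (x : bool * (nat * (nat * nat))) : instr :=
  let: (b, (r, (j, k))) := x in if b then DEC r j k else INC r j.

Definition mach (e : nat) : seq instr := map instr_decode (odflt [::] (unpickle e)).

Lemma mach_surj M : mach (pickle (map instr_code M)) = M.
Proof. by rewrite /mach pickleK /=; elim: M => //= -[r j|r j k] M ->. Qed.

Definition halt_set (e : nat) (p : pairT) : Prop := halts (mach e) (pickle p).

Lemma ce_image Phi : (exists M, forall p, Phi p <-> halts M (pickle p)) ->
  exists e, forall L (A : struc L) l, image Phi A l <-> image (halt_set e) A l.
Proof.
move=> [M HM]; exists (pickle (map instr_code M)) => L A l.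
by split => -[alpha [H1 H2]]; exists alpha; split => //; move: H1;
  rewrite /halt_set mach_surj HM.
Qed.

Lemma image_mono L (Phi : pairT -> Prop) (A A' : struc L) :
  (forall l, diag A l -> diag A' l) -> forall l, image Phi A l -> image Phi A' l.
Proof. by move=> H l [alpha [H1 H2]]; exists alpha; split => // a /H2 /H. Qed.

Lemma image_iso L L' (Phi : pairT -> Prop) (A : struc L) (B B' : struc L') :
  (forall l, image Phi A l <-> diag B l) -> (forall l, image Phi A l <-> diag B' l) ->
  iso B B'.
Proof. by move=> HB HB'; apply: diag_iso => l; rewrite -HB -HB'. Qed.

Definition lo_image (e n m : nat) : Prop :=
  exists B : struc [:: 2],
    (forall l, image (halt_set e) (lo n) l <-> diag B l) /\ iso (lo m) B.

Lemma lo_image_fun e n m m' : lo_image e n m -> lo_image e n m' -> m = m'.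
Proof.
move=> [B [HB1 HB2]] [B' [HB1' HB2']]; apply: lo_iso.
exact: iso_trans HB2 (iso_trans (image_iso HB1 HB1') (iso_sym HB2')).
Qed.

Definition img (e n : nat) : option nat :=
  epsilon (inhabits None)
    (fun o => if o is Some m then lo_image e n m else ~ exists m, lo_image e n m).

Lemma img_some e n m : lo_image e n m -> img e n = Some m.
Proof.
move=> Hm.
have := epsilon_spec (inhabits None)
  (fun o => if o is Some m then lo_image e n m else ~ exists m, lo_image e n m)
  (ex_intro _ (Some m) Hm).
rewrite -/(img e n).
by case: (img e n) => [m' /(lo_image_fun Hm) ->|[]]; last exists m.
Qed.

Definition pf_image (e p m : nat) : Prop :=
  exists B : struc [:: 2],
    (forall l, image (halt_set e) (fld p) l <-> diag B l) /\ iso (lo m) B.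

Definition pf_img (e m : nat) : Prop := exists2 p, prime p & pf_image e p m.

Definition K (f : nat -> bool) : cls :=
  @MkCls [:: 2] (fun A => exists2 n, sizes img pf_img f n & iso (lo n) A).

Lemma K_lo f n : sizes img pf_img f n -> cmem (K f) (lo n).
Proof. by exists n => //; apply: iso_refl. Qed.

Lemma K_iso_closed f : iso_closed (K f).
Proof. by move=> A B [n Hn H1] H2; exists n => //; exact: iso_trans H1 H2. Qed.

Lemma K_le_FLO f : le_c (K f) FLO.
Proof. by apply: le_c_FLO => A [n _ /lo_FLO]. Qed.

(* lo 1 and lo 2 have nested diagrams, hence so do their images, which would make
   those images, and then lo 1 and lo 2, isomorphic. *)
Lemma K_not_le_PF f : ~ le_c (K f) PF.
Proof.
move=> [Phi [[_ [_ Htot]] Hemb]].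
have K1 := K_lo (or_introl (erefl 1) : sizes img pf_img f 1).
have K2 := K_lo (or_intror (or_introl (erefl 2)) : sizes img pf_img f 2).
have [B1 [HB1 HI1]] := Htot _ K1.
have [B2 [HB2 HI2]] := Htot _ K2.
have Hsub : forall l, diag B1 l -> diag B2 l.
  move=> l /HI1 /(image_mono (A' := lo 2)) H; apply/HI2; apply: H => l'.
  exact: diag_lo_mono.
by have /lo_iso := (Hemb _ _ _ _ K1 K2 HI1 HI2).2 (PF_rigid HB1 HB2 Hsub).
Qed.

Section PFEmbedding.
Variables (f : nat -> bool) (Phi : pairT -> Prop) (e : nat).
Hypothesis Hemb : comp_emb PF (K f) Phi.
Hypothesis He : forall L (A : struc L) l, image Phi A l <-> image (halt_set e) A l.

Lemma pf_image_exists p : prime p -> exists2 n, sizes img pf_img f n & pf_image e p n.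
Proof.
move=> Hp; have [B [[n Sn Hn] HI]] := Hemb.1.2.2 (fld p) (fld_PF Hp).
by exists n => //; exists B; split => // l; rewrite -He.
Qed.

Lemma pf_image_sizes p n : prime p -> pf_image e p n -> sizes img pf_img f n.
Proof.
move=> Hp [B' [HB' HB'n]]; have [m Sm [B [HB HBm]]] := pf_image_exists Hp.
suff -> : n = m by [].
by apply: lo_iso; apply: iso_trans HB'n (iso_trans (image_iso HB' HB) (iso_sym HBm)).
Qed.

Lemma pf_image_inj p q n : prime p -> prime q -> pf_image e p n -> pf_image e q n -> p = q.
Proof.
move=> Hp Hq [B [HB HBn]] [B' [HB' HB'n]]; apply: fld_iso => //.
apply: (Hemb.2 _ _ B B' (fld_PF Hp) (fld_PF Hq) _ _).2.
- by move=> l; rewrite He.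
- by move=> l; rewrite He.
- exact: iso_trans (iso_sym HBn) HB'n.
Qed.
End PFEmbedding.

Fixpoint nth_prime (k : nat) : nat :=
  if k is k'.+1 then sval (prime_above (nth_prime k')) else sval (prime_above 0).

Lemma nth_prime_prime k : prime (nth_prime k).
Proof. by case: k => [|k] /=; case: prime_above. Qed.

Lemma nth_prime_inj : injective nth_prime.
Proof.
have mono : forall i j, i < j -> nth_prime i < nth_prime j.
  move=> i j /subnK <-; elim: (j - i.+1) => [|k IH].
    by rewrite add0n /=; case: prime_above.
  by apply: ltn_trans IH _; rewrite addSn /=; case: prime_above.
by move=> i j E; case: (ltngtP i j) => // /mono; rewrite E ltnn.
Qed.

(* Prime fields go injectively to elements of [sizes f]: unboundedly many sizes contradict
   [sizes_avoid_pf_img], boundedly many contradict the pigeonhole principle. *)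
Lemma PF_not_le_K f : ~ le_c PF (K f).
Proof.
move=> [Phi Hemb]; have [e He] := ce_image Hemb.1.1.
case: (classic (forall N, exists m, pf_img e m /\ N < m)) => [Hunb|Hbd].
  have [m [[p Hp Hpm] HnS]] := sizes_avoid_pf_img img f Hunb.
  exact: HnS (pf_image_sizes Hemb He Hp Hpm).
have [N HN] : exists N, forall m, pf_img e m -> m <= N.
  apply: NNPP => H; apply: Hbd => N; apply: NNPP => H'; apply: H; exists N => m Hm.
  by rewrite leqNgt; apply/negP => Hlt; apply: H'; exists m.
pose size_of p := epsilon (inhabits 0) (pf_image e p).
have size_ofP : forall i, pf_image e (nth_prime i) (size_of (nth_prime i)).
  move=> i; apply: (epsilon_spec (inhabits 0) (pf_image e (nth_prime i))).
  by have [n _ Hn] := pf_image_exists Hemb He (nth_prime_prime i); exists n.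
suff : N.+2 <= N.+1 by rewrite ltnn.
apply: (inj_card (f := fun i => size_of (nth_prime i))) => [i _|i j _ _ E].
  rewrite ltnS; apply: HN; exists (nth_prime i); first exact: nth_prime_prime.
  exact: size_ofP.
apply: nth_prime_inj; apply: (pf_image_inj Hemb He (nth_prime_prime i) (nth_prime_prime j)
  (size_ofP i)).
by rewrite E; apply: size_ofP.
Qed.

(* An embedding of K g into K f would contradict [sizes_diagonal]. *)
Lemma K_not_le_K f g : f <> g -> ~ le_c (K g) (K f).
Proof.
move=> Hfg [Phi Hemb]; have [e He] := ce_image Hemb.1.1.
have Himg : forall n, sizes img pf_img g n ->
    exists2 m, sizes img pf_img f m & lo_image e n m.
  move=> n Hn; have [B [[m Sm Hm] HI]] := Hemb.1.2.2 _ (K_lo Hn).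
  by exists m => //; exists B; split => // l; rewrite -He.
have Hinj : forall n n' m, sizes img pf_img g n -> sizes img pf_img g n' ->
    lo_image e n m -> lo_image e n' m -> n = n'.
  move=> n n' m Sn Sn' [B [HB HBm]] [B' [HB' HB'm]]; apply: lo_iso.
  apply: (Hemb.2 _ _ B B' (K_lo Sn) (K_lo Sn') _ _).2.
  - by move=> l; rewrite He.
  - by move=> l; rewrite He.
  - exact: iso_trans (iso_sym HBm) HB'm.
have [n [Sn Hbad]] := sizes_diagonal img pf_img e Hfg.
have [m Sm Hm] := Himg n Sn; rewrite (img_some Hm) in Hbad.
case: Hbad => [//|[[m' [<-] /(_ Sm)] //|[n' [Sn' Hne]]]].
have [m' Sm' Hm'] := Himg n' Sn'; rewrite (img_some Hm') => -[Em].
by apply: Hne; apply: (Hinj n' n m) => //; rewrite -Em.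
Qed.

Theorem proposition4p3 :
  exists K : (nat -> bool) -> cls,
    (forall f, iso_closed (K f)) /\
    (forall f, le_c (K f) FLO /\ incomp (K f) PF) /\
    (forall f g, f <> g -> incomp (K f) (K g)).
Proof.
exists K; split; first exact: K_iso_closed.
split.
  by move=> f; do !split; [exact: K_le_FLO | exact: K_not_le_PF | exact: PF_not_le_K].
by move=> f g Hfg; split; apply: K_not_le_K => // E; apply: Hfg.
Qed.
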